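(* Let $\mathcal A$ be a mixed online algorithm for an online problem $(\mathcal X,\mathcal R,d)$ with start state $s^0$ and cost function $\mathrm{cost}$. Then there is a behavioral online algorithm $\mathcal A'$ for the same problem such that for every finite request sequence $\varrho=r^1\dots r^n$, $$E\big(\mathrm{cost}_{\mathcal A'}(\varrho)\big)=E\big(\mathrm{cost}_{\mathcal A}(\varrho)\big).$$
   Context: Online problem: a set $\mathcal X$ of states (configurations), a set $\mathcal R$ of requests, a start state $s^0\in\mathcal X$, a function $d:\mathcal X\times\mathcal X\to[0,\infty)$ with $d(x,x)=0$ and $d(x,z)\le d(x,y)+d(y,z)$, and a cost function $\mathrm{cost}:\mathcal X\times\mathcal R\times\mathcal X\to[0,\infty)$ ($\mathrm{cost}(x,r,y)$ is the cost of serving request $r$ while moving from $x$ to $y$) satisfying $\mathrm{cost}(u,r,v)\le d(u,x)+\mathrm{cost}(x,r,y)+d(y,v)$ for all $u,x,y,v\in\mathcal X$, $r\in\mathcal R$. $\Pi$ denotes the set of finitely supported probability distributions on $\mathcal X$; a point mass at $x$ is identified with $x$. For $\pi,\pi'\in\Pi$ and $r\in\mathcal R$, $\mathrm{cost}(\pi,r,\pi')$ is the minimum transportation cost: the minimum of $\sum_{x,y}\gamma(x,y)\,\mathrm{cost}(x,r,y)$ over all probability distributions $\gamma$ on $\mathrm{supp}(\pi)\times\mathrm{supp}(\pi')$ whose first marginal is $\pi$ and second marginal is $\pi'$. Mixed online algorithm $\mathcal A$: a set $\mathcal M$ of memory states, a start memory state $m^0$, and for each full state $k=(\pi,m)\in\Pi\times\mathcal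 M$ (reachable by $\mathcal A$) and each request $r$, a finite list of ''subsequent'' full states $k_i=(\pi_i,m_i)$, $i=1,\dots,p$, with weights $\lambda_i>0$, $\sum_i\lambda_i=1$. Starting from $k^0=(s^0,m^0)$, on request $r^t$ the algorithm moves from $k^{t-1}$ to $k^t=k_i$ (the subsequents for $(k^{t-1},r^t)$) with probability $\lambda_i$. The cost of such a step is $\mathrm{cost}_{\mathcal A}(k,r)=\mathrm{cost}(\pi,r,\bar\pi)$ where $\bar\pi=\sum_i\lambda_i\pi_i$, and $\mathrm{cost}_{\mathcal A}(\varrho)=\sum_{t=1}^n\mathrm{cost}_{\mathcal A}(k^{t-1},r^t)$ (a random variable). Behavioral online algorithm: a set $\mathcal M$ of memory states, a start memory state $m^0$, and for each $(x,m)\in\mathcal X\times\mathcal M$ and $r\in\mathcal R$ a finitely supported probability distribution on $\mathcal X\times\mathcal M$. Starting from $(x^0,m^0)=(s^0,m^0)$, on request $r^t$ it draws $(x^t,m^t)$ from the distribution associated with $(x^{t-1},m^{t-1},r^t)$. Its cost on $\varrho$ is the random variable $\sum_{t=1}^n\mathrm{cost}(x^{t-1},r^t,x^t)$. *)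

From HB Require Import structures.
From mathcomp Require Import all_boot all_order all_algebra.
From mathcomp Require Import boolp classical_sets reals.
From Stdlib Require List.
Set Implicit Arguments. Unset Strict Implicit. Unset Printing Implicit Defensive.
Import Order.TTheory GRing.Theory Num.Theory.
Local Open Scope ring_scope.
Local Open Scope classical_set_scope.

Section Defs.
Variables (R : realType) (X Rq : Type).

Fixpoint cundup (s : seq X) : seq X :=
  match s with
  | [::] => [::]
  | x :: s' => if `[< List.In x s' >] then cundup s' else x :: cundup s'
  end.

Record fdist := FDist {
  fd_pmf : X -> R;
  fd_supp : seq X;
  fd_ge0 : forall x, 0 <= fd_pmf x;
  fd_suppP : forall x, fd_pmf x != 0 -> List.In x fd_supp;
  fd_sum1 : \sum_(x <- cundup fd_supp) fd_pmf x = 1 }.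

Definition dirac_pmf (s : X) : X -> R := fun y => if `[< y = s >] then 1 else 0.

Lemma dirac_ge0 s x : 0 <= dirac_pmf s x.
Proof. by rewrite /dirac_pmf; case: ifP. Qed.

Lemma dirac_suppP s x : dirac_pmf s x != 0 -> List.In x [:: s].
Proof.
rewrite /dirac_pmf; case: ifP => [/asboolW -> _|_]; first by left.
by rewrite eqxx.
Qed.

Lemma dirac_sum1 s : \sum_(x <- cundup [:: s]) dirac_pmf s x = 1.
Proof.
rewrite /= asboolF //= big_cons big_nil addr0 /dirac_pmf asboolT //.
Qed.

(* The point mass at s (identified with s). *)
Definition dirac (s : X) : fdist :=
  @FDist (dirac_pmf s) [:: s] (@dirac_ge0 s) (@dirac_suppP s) (dirac_sum1 s).

(* gamma is a coupling (transport plan) between the finitely supported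
   weight functions (f, S) and (g, T), S and T duplicate-free support lists. *)
Definition coupling (f : X -> R) (S : seq X) (g : X -> R) (T : seq X)
    (gam : X -> X -> R) : Prop :=
  (forall x y, 0 <= gam x y) /\
  (forall x, List.In x S -> \sum_(y <- T) gam x y = f x) /\
  (forall y, List.In y T -> \sum_(x <- S) gam x y = g y).

Definition transport_cost (c : X -> Rq -> X -> R) (f : X -> R) (s : seq X)
    (r : Rq) (g : X -> R) (t : seq X) : R :=
  inf [set v | exists gam, coupling f (cundup s) g (cundup t) gam /\
        v = \sum_(x <- cundup s) \sum_(y <- cundup t) gam x y * c x r y].

Section Mixed.
Variables (M : Type) (s0 : X) (m0 : M).
Variable next : (fdist * M) -> Rq -> seq ((fdist * M) * R).

Inductive reachable : fdist * M -> Prop :=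
  | reach0 : reachable (dirac s0, m0)
  | reachS k r k' l : reachable k -> List.In (k', l) (next k r) -> reachable k'.

Definition mixed_valid : Prop :=
  forall k r, reachable k ->
    (forall kl, List.In kl (next k r) -> 0 < kl.2) /\
    \sum_(kl <- next k r) kl.2 = 1.

Definition mix_pmf (k : fdist * M) (r : Rq) : X -> R :=
  fun x => \sum_(kl <- next k r) kl.2 * fd_pmf kl.1.1 x.
Definition mix_supp (k : fdist * M) (r : Rq) : seq X :=
  flatten [seq fd_supp kl.1.1 | kl <- next k r].

Definition mixed_step_cost (c : X -> Rq -> X -> R) (k : fdist * M) (r : Rq) : R :=
  transport_cost c (fd_pmf k.1) (fd_supp k.1) r (mix_pmf k r) (mix_supp k r).

Fixpoint mixed_runs (k : fdist * M) (rs : seq Rq) : seq (R * seq (fdist * M)) :=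
  match rs with
  | [::] => [:: (1, [::])]
  | r :: rs' => flatten [seq [seq (kl.2 * pr.1, kl.1 :: pr.2)
                               | pr <- mixed_runs kl.1 rs'] | kl <- next k r]
  end.

Fixpoint mixed_run_cost (c : X -> Rq -> X -> R) (k : fdist * M) (rs : seq Rq)
    (run : seq (fdist * M)) : R :=
  match rs, run with
  | r :: rs', k' :: run' => mixed_step_cost c k r + mixed_run_cost c k' rs' run'
  | _, _ => 0
  end.

Definition mixed_expected_cost (c : X -> Rq -> X -> R) (rs : seq Rq) : R :=
  \sum_(pr <- mixed_runs (dirac s0, m0) rs)
     pr.1 * mixed_run_cost c (dirac s0, m0) rs pr.2.
End Mixed.

Section Behavioral.
Variables (M : Type) (s0 : X) (m0 : M).
Variable next : X -> M -> Rq -> seq ((X * M) * R).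

Definition behav_valid : Prop :=
  forall x m r,
    (forall e, List.In e (next x m r) -> 0 <= e.2) /\
    \sum_(e <- next x m r) e.2 = 1.

Fixpoint behav_runs (xm : X * M) (rs : seq Rq) : seq (R * seq (X * M)) :=
  match rs with
  | [::] => [:: (1, [::])]
  | r :: rs' => flatten [seq [seq (e.2 * pr.1, e.1 :: pr.2)
                               | pr <- behav_runs e.1 rs'] | e <- next xm.1 xm.2 r]
  end.

Fixpoint behav_run_cost (c : X -> Rq -> X -> R) (x : X) (rs : seq Rq)
    (run : seq (X * M)) : R :=
  match rs, run with
  | r :: rs', xm :: run' => c x r xm.1 + behav_run_cost c xm.1 rs' run'
  | _, _ => 0
  end.

Definition behav_expected_cost (c : X -> Rq -> X -> R) (rs : seq Rq) : R :=
  \sum_(pr <- behav_runs (s0, m0) rs) pr.1 * behav_run_cost c s0 rs pr.2.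
End Behavioral.

End Defs.

(* The behavioral algorithm remembers the full state k = (pi, m) of the mixed
   algorithm and keeps its own position distributed according to pi. On request r
   it moves from x to y with probability gamma(x, y) / pi(x), where gamma is an
   optimal coupling of pi with the mixture pibar = sum_i lambda_i pi_i, and then
   moves to the subsequent state k_i with the posterior probability
   lambda_i pi_i(y) / pibar(y). The expected cost of the move is the transport
   cost cost(pi, r, pibar) of the mixed algorithm, and given the new memory k_i
   the new position is distributed according to pi_i, which restores the
   invariant. Optimal couplings exist because the transport polytope is compact;
   no property of d or cost is needed. *)

From HB Require Import structures.
From mathcomp Require Import all_boot all_order all_algebra.
From mathcomp Require Import boolp classical_sets reals topology normedtype.
From mathcomp Require Import derive ring.
From Stdlib Require List.
Set Implicit Arguments. Unset Strict Implicit. Unset Printing Implicit Defensive.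
Import Order.TTheory GRing.Theory Num.Theory.
Import numFieldTopology.Exports numFieldNormedType.Exports.
Local Open Scope ring_scope.

Lemma InP (A : eqType) (x : A) (s : seq A) : List.In x s <-> x \in s.
Proof.
elim: s => [|a s IH] /=; first by split.
rewrite in_cons; split.
- by case=> [->|/IH ->]; rewrite ?eqxx ?orbT.
- by case/orP => [/eqP ->|/IH]; [left|right].
Qed.
Arguments InP {A x s}.

Section SumsOverLists.
Variable R : numDomainType.

Lemma eq_big_In (A : Type) (s : seq A) (F G : A -> R) :
  (forall a, List.In a s -> F a = G a) -> \sum_(a <- s) F a = \sum_(a <- s) G a.
Proof.
elim: s => [|a s IH] FG; first by rewrite !big_nil.
rewrite !big_cons FG /=; last by left.
by rewrite IH // => b sb; apply: FG; right.
Qed.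

Lemma sumr_ge0_In (A : Type) (s : seq A) (F : A -> R) :
  (forall a, List.In a s -> 0 <= F a) -> 0 <= \sum_(a <- s) F a.
Proof.
elim: s => [|a s IH] F_ge0; first by rewrite big_nil.
rewrite big_cons addr_ge0 //; first by apply: F_ge0; left.
by apply: IH => b sb; apply: F_ge0; right.
Qed.

Lemma psumr_eq0_In (A : Type) (s : seq A) (F : A -> R) :
  (forall a, List.In a s -> 0 <= F a) -> \sum_(a <- s) F a = 0 ->
  forall a, List.In a s -> F a = 0.
Proof.
elim: s => [|a s IH] F_ge0 //=; rewrite big_cons => /eqP.
have Fs_ge0 : forall b, List.In b s -> 0 <= F b by move=> b sb; apply: F_ge0; right.
rewrite paddr_eq0 ?sumr_ge0_In ?F_ge0 //; last by left.
by case/andP => /eqP Fa /eqP /(IH Fs_ge0) Fs b [<-|/Fs].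
Qed.

End SumsOverLists.

Lemma sum_undup_support (T : eqType) (R : nmodType) (s1 s2 : seq T) (F : T -> R) :
  (forall x, F x != 0 -> (x \in s1) = (x \in s2)) ->
  \sum_(x <- undup s1) F x = \sum_(x <- undup s2) F x.
Proof.
move=> s12.
have sum_support s : \sum_(x <- undup s) F x = \sum_(x <- [seq x <- undup s | F x != 0]) F x.
  by rewrite big_filter [RHS]big_mkcond; apply: eq_bigr => x _; have [->|] := eqVneq (F x) 0.
rewrite !sum_support; apply/perm_big/uniq_perm; rewrite ?filter_uniq ?undup_uniq // => x.
by rewrite !mem_filter !mem_undup; have [|/s12] := eqVneq (F x) 0.
Qed.

Lemma In_allpairs (A B C : Type) (s : seq A) (t : seq B) (h : A -> B -> C) e :
  List.In e [seq h a b | a <- s, b <- t] ->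
  exists a b, [/\ List.In a s, List.In b t & e = h a b].
Proof.
elim: s => [|a s IH] //= /List.in_app_iff [/List.in_map_iff [b [<- tb]]|].
  by exists a, b; split => //; left.
by case/IH => a' [b [sa' tb ->]]; exists a', b; split => //; right.
Qed.

Section OptimalCoupling.
Local Open Scope classical_set_scope.
Variables (R : realType) (X : eqType) (f g : X -> R) (S T : seq X) (w : X -> X -> R).
Hypotheses (S_uniq : uniq S) (T_uniq : uniq T).

Let pairs := [seq (x, y) | x <- S, y <- T].
Let N := size pairs.
Let pair (j : 'I_N) : X * X := tnth (in_tuple pairs) j.

Let pair_inj : injective pair.
Proof.
have pairs_uniq : uniq pairs by apply: allpairs_uniq => // -[? ?] [? ?] _ _ [-> ->].
move=> i j; rewrite /pair !(tnth_nth (pair i)) => /eqP.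
by rewrite nth_uniq // => /eqP/val_inj.
Qed.

Let pair_mem j : ((pair j).1 \in S) && ((pair j).2 \in T).
Proof.
have /allpairsP[[x y] /= [xS yT ->]] : pair j \in pairs by apply: mem_tnth.
exact/andP.
Qed.

Let sum_pairs (F : X * X -> R) :
  \sum_(x <- S) \sum_(y <- T) F (x, y) = \sum_(j < N) F (pair j).
Proof. by rewrite -big_allpairs; have /= := big_tuple 0 +%R (in_tuple pairs) xpredT F. Qed.

Let sum_pairs_row (F : X * X -> R) x : x \in S ->
  \sum_(y <- T) F (x, y) = \sum_(j < N | (pair j).1 == x) F (pair j).
Proof.
move=> xS; rewrite [RHS]big_mkcond /=.
have /= <- := sum_pairs (fun q => if q.1 == x then F q else 0).
rewrite [RHS](bigD1_seq x) //= eqxx [X in _ + X]big1 ?addr0 // => x' /negbTE x'x.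
by rewrite big1 // => y _; rewrite x'x.
Qed.

Let sum_pairs_col (F : X * X -> R) y : y \in T ->
  \sum_(x <- S) F (x, y) = \sum_(j < N | (pair j).2 == y) F (pair j).
Proof.
move=> yT; rewrite [RHS]big_mkcond /=.
have /= <- := sum_pairs (fun q => if q.2 == y then F q else 0).
apply: eq_bigr => x _; rewrite [RHS](bigD1_seq y) //= eqxx big1 ?addr0 //.
by move=> y' /negbTE ->.
Qed.

(* Couplings are encoded by their values on the pairs of [S] x [T], so that the
   transport polytope becomes a compact subset of ['rV_N]. *)
Let row_mass (v : 'rV[R]_N) x := \sum_(j < N | (pair j).1 == x) v ord0 j.
Let col_mass (v : 'rV[R]_N) y := \sum_(j < N | (pair j).2 == y) v ord0 j.
Let plan_vectors := [set v : 'rV[R]_N | (forall j, 0 <= v ord0 j) /\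
  (forall x, x \in S -> row_mass v x = f x) /\ (forall y, y \in T -> col_mass v y = g y)].
Let plan_cost (v : 'rV[R]_N) := \sum_(j < N) v ord0 j * w (pair j).1 (pair j).2.
Let coupling_costs := [set z | exists gam, coupling f S g T gam /\
  z = \sum_(x <- S) \sum_(y <- T) gam x y * w x y].

Let coupling_costsE : coupling_costs = plan_cost @` plan_vectors.
Proof.
apply/seteqP; split.
- move=> _ [gam [[gam_ge0 [gam_row gam_col]] ->]].
  exists (\row_j gam (pair j).1 (pair j).2); last first.
    rewrite (sum_pairs (fun q => gam q.1 q.2 * w q.1 q.2)).
    by apply: eq_bigr => j _; rewrite mxE.
  split; first by move=> j; rewrite mxE.
  split=> [x xS|y yT].
  + rewrite -[RHS](gam_row _ (InP.2 xS)) (sum_pairs_row (fun q => gam q.1 q.2)) //.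
    by apply: eq_bigr => j _; rewrite mxE.
  + rewrite -[RHS](gam_col _ (InP.2 yT)) (sum_pairs_col (fun q => gam q.1 q.2)) //.
    by apply: eq_bigr => j _; rewrite mxE.
- move=> _ [v [v_ge0 [v_row v_col]] <-].
  pose gam x y := \sum_(j < N | pair j == (x, y)) v ord0 j.
  have gam_pair j : gam (pair j).1 (pair j).2 = v ord0 j.
    rewrite /gam -surjective_pairing (eq_bigl (pred1 j)) ?big_pred1_eq //.
    by move=> i; rewrite /= inj_eq //; apply: pair_inj.
  exists gam; split; last first.
    rewrite (sum_pairs (fun q => gam q.1 q.2 * w q.1 q.2)).
    by apply: eq_bigr => j _; rewrite gam_pair.
  split; first by move=> x y; apply: sumr_ge0.
  split=> [x /InP xS|y /InP yT].
  + rewrite (sum_pairs_row (fun q => gam q.1 q.2)) // -v_row //.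
    by apply: eq_bigr => j _; rewrite gam_pair.
  + rewrite (sum_pairs_col (fun q => gam q.1 q.2)) // -v_col //.
    by apply: eq_bigr => j _; rewrite gam_pair.
Qed.

Let plan_vectors_closed : closed plan_vectors.
Proof.
have mass_cont (P : pred 'I_N) :
    continuous (fun v : 'rV[R]_N => \sum_(j < N | P j) v ord0 j).
  by apply: continuous_big => [|j _]; [exact: add_continuous|exact: coord_continuous].
have -> : plan_vectors =
    \bigcap_(j in setT) ((fun v : 'rV[R]_N => v ord0 j) @^-1` [set z | 0 <= z])
    `&` \bigcap_(x in [set x | x \in S]) (row_mass^~ x @^-1` [set z | z = f x])
    `&` \bigcap_(y in [set y | y \in T]) (col_mass^~ y @^-1` [set z | z = g y]).
  apply/seteqP; split=> v.
  - by move=> [v_ge0 [v_row v_col]]; split; [split|] => a /= Ha; auto.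
  - by move=> [[v_ge0 v_row] v_col]; split; [move=> j; exact: v_ge0|split].
apply: closedI; first apply: closedI.
- apply: closed_bigI => j _; apply: preimage_closed; last exact: closed_ge.
  by move=> v _; apply: coord_continuous.
- apply: closed_bigI => x _; apply: preimage_closed; last exact: closed_eq.
  by move=> v _; apply: mass_cont.
- apply: closed_bigI => y _; apply: preimage_closed; last exact: closed_eq.
  by move=> v _; apply: mass_cont.
Qed.

Let plan_vectors_compact : compact plan_vectors.
Proof.
have box_compact : compact [set v : 'rV[R]_N | forall j, `[0, f (pair j).1] (v ord0 j)].
  by apply: (@rV_compact _ _ (fun j => `[0, f (pair j).1])) => j; apply: segment_compact.
apply: subclosed_compact plan_vectors_closed box_compact _.
move=> v [v_ge0 [v_row _]] j /=; rewrite in_itv /= v_ge0.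
have /andP[xS _] := pair_mem j.
by rewrite -(v_row _ xS) /row_mass (bigD1 j) //= lerDl sumr_ge0.
Qed.

Lemma exists_optimal_coupling : (exists gam, coupling f S g T gam) ->
  exists2 gam, coupling f S g T gam &
    inf coupling_costs = \sum_(x <- S) \sum_(y <- T) gam x y * w x y.
Proof.
move=> [gam0 gam0_coupling].
have cost_cont : continuous plan_cost.
  apply: continuous_big => [|j _ v]; first exact: add_continuous.
  by apply: continuousM; [apply: coord_continuous|apply: cst_continuous].
have plan0 : plan_vectors !=set0.
  have : coupling_costs (\sum_(x <- S) \sum_(y <- T) gam0 x y * w x y) by exists gam0.
  by rewrite coupling_costsE => -[v v_plan _]; exists v.
have [v /set_mem v_plan v_min] :=
  compact_EVT_min plan0 plan_vectors_compact (continuous_subspaceT cost_cont).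
have v_cost : coupling_costs (plan_cost v) by rewrite coupling_costsE; exists v.
have [gam [gam_coupling gam_cost]] := v_cost.
exists gam => //; rewrite -gam_cost.
have v_lb : lbound coupling_costs (plan_cost v).
  by rewrite coupling_costsE => _ [u u_plan <-]; apply/v_min/mem_set.
apply/le_anti/andP; split; first by apply: ge_inf => //; exists (plan_cost v).
by apply: lb_le_inf => //; exists (plan_cost v).
Qed.

End OptimalCoupling.

Section BehavioralRuns.
Variables (R : realType) (X Rq M : Type) (c : X -> Rq -> X -> R).
Variable next : X -> M -> Rq -> seq ((X * M) * R).
Hypothesis next_valid : behav_valid next.

Definition behav_cost_from (xm : X * M) (rs : seq Rq) : R :=
  \sum_(pr <- behav_runs next xm rs) pr.1 * behav_run_cost c xm.1 rs pr.2.

Lemma behav_runs_mass1 xm rs : \sum_(pr <- behav_runs next xm rs) pr.1 = 1.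
Proof.
elim: rs xm => [|r rs IH] xm /=; first by rewrite big_seq1.
rewrite big_flatten /= big_map -(next_valid xm.1 xm.2 r).2.
by apply: eq_bigr => e _; rewrite big_map -mulr_sumr IH mulr1.
Qed.

Lemma behav_cost_from_cons xm r rs : behav_cost_from xm (r :: rs) =
  \sum_(e <- next xm.1 xm.2 r) e.2 * (c xm.1 r e.1.1 + behav_cost_from e.1 rs).
Proof.
rewrite /behav_cost_from /= big_flatten /= big_map; apply: eq_bigr => e _.
rewrite big_map (eq_bigr (fun pr => e.2 * c xm.1 r e.1.1 * pr.1 +
  e.2 * (pr.1 * behav_run_cost c e.1.1 rs pr.2))) => [|pr _]; last by rewrite /=; ring.
by rewrite big_split -!mulr_sumr behav_runs_mass1 mulr1 [RHS]mulrDr.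
Qed.

End BehavioralRuns.

Section MixedAlgorithm.
Variables (R : realType) (X Rq M : Type) (s0 : X) (m0 : M) (c : X -> Rq -> X -> R).
Variable next : (fdist R X * M) -> Rq -> seq ((fdist R X * M) * R).
Hypothesis next_valid : mixed_valid s0 m0 next.

Local Notation reachable := (reachable s0 m0 next).

Lemma reachable_next k r kl : reachable k -> List.In kl (next k r) -> reachable kl.1.
Proof. by case: kl => k' l; apply: reachS. Qed.

Lemma next_weight_gt0 k r kl : reachable k -> List.In kl (next k r) -> 0 < kl.2.
Proof. by move=> /(next_valid r) [+ _]; apply. Qed.

Lemma next_weights_sum1 k r : reachable k -> \sum_(kl <- next k r) kl.2 = 1.
Proof. by move=> /(next_valid r) []. Qed.

Definition mixed_cost_from (k : fdist R X * M) (rs : seq Rq) : R :=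
  \sum_(pr <- mixed_runs next k rs) pr.1 * mixed_run_cost next c k rs pr.2.

Lemma mixed_runs_mass1 k rs : reachable k ->
  \sum_(pr <- mixed_runs next k rs) pr.1 = 1.
Proof.
elim: rs k => [|r rs IH] k k_reach /=; first by rewrite big_seq1.
rewrite big_flatten /= big_map -(next_weights_sum1 r k_reach).
apply: eq_big_In => kl kl_next; rewrite big_map -mulr_sumr.
by rewrite IH ?mulr1 //; apply: reachable_next kl_next.
Qed.

Lemma mixed_cost_from_cons k r rs : reachable k -> mixed_cost_from k (r :: rs) =
  mixed_step_cost next c k r + \sum_(kl <- next k r) kl.2 * mixed_cost_from kl.1 rs.
Proof.
move=> k_reach; rewrite /mixed_cost_from /= big_flatten /= big_map.
set C := mixed_step_cost next c k r.
rewrite (eq_big_In (G := fun kl => kl.2 * C + kl.2 * mixed_cost_from kl.1 rs)).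
  by rewrite big_split -mulr_suml next_weights_sum1 ?mul1r.
move=> kl kl_next; rewrite big_map (eq_bigr (fun pr => kl.2 * C * pr.1 +
  kl.2 * (pr.1 * mixed_run_cost next c kl.1 rs pr.2))) => [|pr _]; last by rewrite /=; ring.
rewrite big_split -!mulr_sumr mixed_runs_mass1 ?mulr1 //.
exact: reachable_next kl_next.
Qed.

HB.instance Definition _ := gen_eqMixin X.

Local Notation pmf k := (fd_pmf k.1).
Local Notation supp k := (undup (fd_supp k.1)).
Local Notation mix k r := (mix_pmf next k r).
Local Notation msupp k r := (undup (mix_supp next k r)).

Lemma cundupE (s : seq X) : cundup s = undup s.
Proof.
elim: s => //= x s ->; case: asboolP => [/InP -> //|xs].
by rewrite (_ : x \in s = false) //; apply/negP => /InP.
Qed.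

Lemma mem_fd_supp (p : fdist R X) x : fd_pmf p x != 0 -> x \in fd_supp p.
Proof. by move=> px; apply/InP; apply: fd_suppP. Qed.

Lemma fd_sum1_undup (p : fdist R X) : \sum_(x <- undup (fd_supp p)) fd_pmf p x = 1.
Proof. by rewrite -cundupE fd_sum1. Qed.

Lemma mem_mix_supp k r kl y : List.In kl (next k r) -> y \in fd_supp kl.1.1 ->
  y \in mix_supp next k r.
Proof.
rewrite /mix_supp; elim: (next k r) => //= kl' s IH [<-|kl_s] y_supp; rewrite mem_cat.
  by rewrite y_supp.
by rewrite IH ?orbT.
Qed.

Lemma mix_ge0 k r y : reachable k -> 0 <= mix k r y.
Proof.
move=> k_reach; apply: sumr_ge0_In => kl kl_next.
by rewrite mulr_ge0 ?fd_ge0 // ltW // (next_weight_gt0 k_reach kl_next).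
Qed.

Lemma mix_sum1 k r : reachable k -> \sum_(y <- msupp k r) mix k r y = 1.
Proof.
move=> k_reach; rewrite /mix_pmf exchange_big /= -(next_weights_sum1 r k_reach).
apply: eq_big_In => kl kl_next; rewrite -mulr_sumr -[RHS]mulr1 -(fd_sum1_undup kl.1.1).
congr (_ * _); apply: sum_undup_support => y /mem_fd_supp y_supp.
by rewrite y_supp (mem_mix_supp kl_next y_supp).
Qed.

Lemma mix_eq0 k r kl y : reachable k -> mix k r y = 0 -> List.In kl (next k r) ->
  kl.2 * pmf kl.1 y = 0.
Proof.
move=> k_reach mix0; apply: (psumr_eq0_In _ mix0) => kl' kl'_next.
by rewrite mulr_ge0 ?fd_ge0 // ltW // (next_weight_gt0 k_reach kl'_next).
Qed.

Definition optimal_plan k r (gam : X -> X -> R) : Prop :=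
  coupling (pmf k) (supp k) (mix k r) (msupp k r) gam /\
  mixed_step_cost next c k r = \sum_(x <- supp k) \sum_(y <- msupp k r) gam x y * c x r y.

Lemma exists_optimal_plans :
  exists plan, forall k r, reachable k -> optimal_plan k r (plan k r).
Proof.
suff /choice [plan plan_opt] : forall kr : (fdist R X * M) * Rq,
    exists gam, reachable kr.1 -> optimal_plan kr.1 kr.2 gam.
  by exists (fun k r => plan (k, r)) => k r; apply: (plan_opt (k, r)).
case=> k r /=; have [k_reach|] := pselect (reachable k); last first.
  by exists (fun _ _ => 0).
have product : coupling (pmf k) (supp k) (mix k r) (msupp k r)
    (fun x y => pmf k x * mix k r y).
  split; first by move=> x y; rewrite mulr_ge0 ?fd_ge0 ?mix_ge0.
  split=> [x _|y _]; first by rewrite -mulr_sumr mix_sum1 ?mulr1.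
  by rewrite -mulr_suml fd_sum1_undup mul1r.
have [gam gam_coupling gam_inf] := exists_optimal_coupling (fun x y => c x r y)
  (undup_uniq _) (undup_uniq _) (ex_intro _ _ product).
exists gam => _; split => //.
by rewrite /mixed_step_cost /transport_cost !cundupE; exact: gam_inf.
Qed.

Section Construction.
Variable plan : (fdist R X * M) -> Rq -> X -> X -> R.
Hypothesis plan_optimal : forall k r, reachable k -> optimal_plan k r (plan k r).

Lemma plan_ge0 k r x y : reachable k -> 0 <= plan k r x y.
Proof. by move=> /(plan_optimal r) [[+ _] _]; apply. Qed.

Lemma plan_row k r x : reachable k -> x \in supp k ->
  \sum_(y <- msupp k r) plan k r x y = pmf k x.
Proof. by move=> /(plan_optimal r) [[_ [+ _]] _] /InP; apply. Qed.

Lemma plan_col k r y : reachable k -> y \in msupp k r ->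
  \sum_(x <- supp k) plan k r x y = mix k r y.
Proof. by move=> /(plan_optimal r) [[_ [_ +]] _] /InP; apply. Qed.

Lemma plan_eq0_row k r x y : reachable k -> x \in supp k -> pmf k x = 0 ->
  y \in msupp k r -> plan k r x y = 0.
Proof.
move=> k_reach xS px0 /InP; apply: psumr_eq0_In => [y' _|]; first exact: plan_ge0.
by rewrite plan_row.
Qed.

Lemma plan_eq0_col k r x y : reachable k -> y \in msupp k r -> mix k r y = 0 ->
  x \in supp k -> plan k r x y = 0.
Proof.
move=> k_reach yT mix0 /InP; apply: (@psumr_eq0_In _ _ _ (plan k r ^~ y)).
  by move=> x' _; apply: plan_ge0.
by rewrite plan_col.
Qed.

(* Junk value [0] when [mix k r y = 0]. *)
Definition posterior k r (kl : (fdist R X * M) * R) y := kl.2 * pmf kl.1 y / mix k r y.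

Definition step_weight k r x kl y := plan k r x y / pmf k x * posterior k r kl y.

(* Unreachable memories and positions of probability zero are never visited;
   staying put there only makes the transition a distribution. *)
Definition behav_next x k r : seq ((X * (fdist R X * M)) * R) :=
  if `[< reachable k /\ pmf k x != 0 >] then
    [seq ((y, kl.1), step_weight k r x kl y) | kl <- next k r, y <- msupp k r]
  else [:: ((x, k), 1)].

Lemma behav_next_active x k r : reachable k -> pmf k x != 0 ->
  behav_next x k r =
    [seq ((y, kl.1), step_weight k r x kl y) | kl <- next k r, y <- msupp k r].
Proof. by move=> k_reach px_neq0; rewrite /behav_next asboolT. Qed.

Lemma plan_posterior_sum k r x y : reachable k -> x \in supp k -> y \in msupp k r ->
  \sum_(kl <- next k r) plan k r x y * posterior k r kl y = plan k r x y.
Proof.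
move=> k_reach xS yT; rewrite -mulr_sumr /posterior -mulr_suml.
have [mix0|mix_neq0] := eqVneq (mix k r y) 0.
  by rewrite (plan_eq0_col k_reach yT mix0 xS) mul0r.
by rewrite divff ?mulr1.
Qed.

Lemma plan_posterior_col k r kl y : reachable k -> List.In kl (next k r) ->
  y \in msupp k r ->
  \sum_(x <- supp k) plan k r x y * posterior k r kl y = kl.2 * pmf kl.1 y.
Proof.
move=> k_reach kl_next yT; rewrite -mulr_suml plan_col // /posterior.
have [mix0|mix_neq0] := eqVneq (mix k r y) 0.
  by rewrite mix0 mul0r (mix_eq0 k_reach mix0 kl_next).
by rewrite mulrCA divff ?mulr1.
Qed.

Lemma behav_next_valid : behav_valid behav_next.
Proof.
move=> x k r; rewrite /behav_next; case: asboolP => [[k_reach px_neq0]|_]; last first.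
  by split; [move=> e [<-|]|rewrite big_seq1].
have xS : x \in supp k by rewrite mem_undup mem_fd_supp.
split.
  move=> e /(@In_allpairs _ _ _ _ _ (fun kl y => ((y, kl.1), step_weight k r x kl y))).
  case=> kl [y [kl_next _ ->]] /=.
  rewrite /step_weight /posterior !mulr_ge0 ?invr_ge0 ?plan_ge0 ?fd_ge0 ?mix_ge0 //.
  exact/ltW/(next_weight_gt0 k_reach kl_next).
rewrite big_allpairs_dep /= exchange_big /=.
rewrite (eq_big_seq (fun y => plan k r x y / pmf k x)) => [|y yT].
  by rewrite -mulr_suml plan_row // divff.
rewrite /step_weight; under eq_bigr do rewrite mulrAC.
by rewrite -mulr_suml plan_posterior_sum.
Qed.

Local Notation behav_cost := (behav_cost_from c behav_next).

Lemma behav_cost_step k r rs x : reachable k -> x \in supp k ->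
  pmf k x * behav_cost (x, k) (r :: rs) =
  \sum_(y <- msupp k r) plan k r x y * c x r y +
  \sum_(kl <- next k r) \sum_(y <- msupp k r)
    plan k r x y * posterior k r kl y * behav_cost (y, kl.1) rs.
Proof.
move=> k_reach xS; have [px0|px_neq0] := eqVneq (pmf k x) 0.
  have plan0 y : y \in msupp k r -> plan k r x y = 0 := plan_eq0_row k_reach xS px0.
  rewrite px0 mul0r big1_seq => [|y /andP[_ /plan0 ->]]; last by rewrite mul0r.
  rewrite add0r; symmetry; apply: big1 => kl _.
  by apply: big1_seq => y /andP[_ /plan0 ->]; rewrite !mul0r.
rewrite (behav_cost_from_cons _ behav_next_valid) /= behav_next_active //.
rewrite big_allpairs_dep /= mulr_sumr.
have step y kl : pmf k x * (step_weight k r x kl y * (c x r y + behav_cost (y, kl.1) rs)) =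
    plan k r x y * posterior k r kl y * c x r y +
    plan k r x y * posterior k r kl y * behav_cost (y, kl.1) rs.
  by rewrite /step_weight (mulrC (plan k r x y)) !mulrA divff // mul1r mulrDr.
rewrite (eq_bigr (fun kl =>
    \sum_(y <- msupp k r) plan k r x y * posterior k r kl y * c x r y +
    \sum_(y <- msupp k r) plan k r x y * posterior k r kl y * behav_cost (y, kl.1) rs))
  => [|kl _]; last by rewrite mulr_sumr -big_split; apply: eq_bigr => y _; apply: step.
rewrite big_split /=; congr (_ + _); rewrite exchange_big /=; apply: eq_big_seq => y yT.
by rewrite -mulr_suml plan_posterior_sum.
Qed.

Lemma behav_cost_invariant k rs : reachable k ->
  \sum_(x <- supp k) pmf k x * behav_cost (x, k) rs = mixed_cost_from k rs.
Proof.
elim: rs k => [|r rs IH] k k_reach.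
  rewrite /mixed_cost_from /= big_seq1 mul1r big1 // => x _.
  by rewrite /behav_cost_from /= big_seq1 mul1r mulr0.
under eq_big_seq => x xS do rewrite (behav_cost_step r rs k_reach xS).
rewrite big_split /= mixed_cost_from_cons //; congr (_ + _).
  by rewrite (proj2 (plan_optimal r k_reach)).
rewrite exchange_big /=; apply: eq_big_In => kl kl_next; rewrite exchange_big /=.
rewrite (eq_big_seq (fun y => kl.2 * (pmf kl.1 y * behav_cost (y, kl.1) rs))).
  rewrite -mulr_sumr -IH; last exact: reachable_next kl_next.
  congr (_ * _); apply: sum_undup_support => y.
  rewrite mulf_eq0 negb_or => /andP[/mem_fd_supp y_supp _].
  by rewrite y_supp (mem_mix_supp kl_next y_supp).
by move=> y yT; rewrite -mulr_suml plan_posterior_col // mulrA.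
Qed.

Lemma behav_next_expected_cost rs :
  behav_expected_cost s0 (dirac R s0, m0) behav_next c rs =
  mixed_expected_cost s0 m0 next c rs.
Proof.
have := behav_cost_invariant rs (reach0 s0 m0 next).
by rewrite /= big_seq1 /dirac_pmf asboolT // mul1r.
Qed.

End Construction.

End MixedAlgorithm.

Theorem mainTheorem1 (R : realType) (X Rq : Type) (s0 : X)
  (d : X -> X -> R) (c : X -> Rq -> X -> R)
  (d_ge0 : forall x y, 0 <= d x y)
  (d_refl : forall x, d x x = 0)
  (d_tri : forall x y z, d x z <= d x y + d y z)
  (c_ge0 : forall x r y, 0 <= c x r y)
  (c_d : forall u x y v r, c u r v <= d u x + c x r y + d y v)
  (M : Type) (m0 : M) (next : (fdist R X * M) -> Rq -> seq ((fdist R X * M) * R))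
  (hA : mixed_valid s0 m0 next) :
  exists (M' : Type) (m0' : M') (next' : X -> M' -> Rq -> seq ((X * M') * R)),
    behav_valid next' /\
    forall rs : seq Rq,
      behav_expected_cost s0 m0' next' c rs = mixed_expected_cost s0 m0 next c rs.
Proof.
have [plan plan_optimal] := exists_optimal_plans c hA.
exists (fdist R X * M)%type, (dirac R s0, m0), (behav_next s0 m0 next plan).
split; first exact: behav_next_valid plan_optimal.
exact: behav_next_expected_cost plan_optimal.
Qed.
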